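(* Let $f:E\to\mathbb{R}$ be $L$-smooth and $\gamma$-weakly-quasi-convex with respect to a minimizer $x_*$, for some $\gamma\in(0,1]$. Then the iterates of Algorithm AGMsDR (either option) started at $x^0$ satisfy, for every $k\ge 0$, $$A_k\big(f(x^k)-f(x_* )\big)\le(1-\gamma)A_k\big(f(x^0)-f(x_* )\big)+V(x_*,x^0).$$
   Context: $E$ is a finite-dimensional real vector space with a norm $\|\cdot\|$; $E^*$ is its dual, $\langle g,x\rangle$ denotes the value of $g\in E^*$ at $x\in E$, and $\|g\|_*=\max\{\langle g,x\rangle:\|x\|\le 1\}$. For $g\in E^*$, $g^{\#}$ denotes a (fixed) element $s\in E$ with $\|s\|\le 1$ and $\langle g,s\rangle=\|g\|_*$. A prox-function $d:E\to\mathbb{R}$ is continuously differentiable, convex, $1$-strongly convex with respect to $\|\cdot\|$ (i.e. $d(y)-d(x)-\langle\nabla d(x),y-x\rangle\ge\frac12\|y-x\|^2$ for all $x,y\in E$) and satisfies $\min_E d=0$; its Bregman divergence is $V(x,z)=d(x)-d(z)-\langle\nabla d(z),x-z\rangle$. A function $f:E\to\mathbb{R}$ is $L$-smooth ($L>0$) if it is continuously differentiable and $\|\nabla f(x)-\nabla f(y)\|_*\le L\|x-y\|$ for all $x,y\in E$. A differentiable $f$ with a minimizer $x_*$ is $\gamma$-weakly-quasi-convex ($\gamma\in(0,1]$) if $\gamma(f(x)-f(x_* ))\le\langle\nabla f(x),x-x_*\rangle$ for all $x\in E$. Algorithm AGMsDR (input $x^0\in E$, and $L$ for Option (a)): set $A_0=0$,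 $v^0=x^0$, $\psi_0(x)=V(x,x^0)$. For $k=0,1,2,\dots$: 1. Choose $\beta_k\in\arg\min_{\beta\in[0,1]} f(v^k+\beta(x^k-v^k))$ (a global minimizer over the interval) and set $y^k=v^k+\beta_k(x^k-v^k)$. 2. Option (a): $x^{k+1}\in\arg\min_{x\in E}\{f(y^k)+\langle\nabla f(y^k),x-y^k\rangle+\frac L2\|x-y^k\|^2\}$, and $a_{k+1}>0$ solves $\frac{a_{k+1}^2}{A_k+a_{k+1}}=\frac1L$. Option (b): $h_{k+1}\in\arg\min_{h\ge0} f(y^k-h(\nabla f(y^k))^{\#})$, $x^{k+1}=y^k-h_{k+1}(\nabla f(y^k))^{\#}$, and $a_{k+1}$ is the largest solution of $f(y^k)-\frac{a_{k+1}^2}{2(A_k+a_{k+1})}\|\nabla f(y^k)\|_*^2=f(x^{k+1})$. 3. $A_{k+1}=A_k+a_{k+1}$; $\psi_{k+1}(x)=\psi_k(x)+a_{k+1}\{f(y^k)+\langle\nabla f(y^k),x-y^k\rangle\}$; $v^{k+1}=\arg\min_{x\in E}\psi_{k+1}(x)$. It is assumed that all the minima in the algorithm are attained, and that $\nabla f(y^k)\neq 0$ for all iterations considered (otherwise $y^k$ is a stationary point and the method stops). *)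

From Stdlib Require Import Reals.
From mathcomp Require Import ssreflect ssrfun ssrbool eqtype ssrnat fintype bigop.
Set Implicit Arguments.
Unset Strict Implicit.
Open Scope R_scope.

(* The finite-dimensional space E is modelled as R^n = 'I_n -> R.
   Its dual E^* is identified with R^n through the standard pairing. *)
Definition E (n : nat) := 'I_n -> R.

Definition vadd {n} (x y : E n) : E n := fun i => x i + y i.
Definition vsub {n} (x y : E n) : E n := fun i => x i - y i.
Definition vscal {n} (c : R) (x : E n) : E n := fun i => c * x i.
Definition vzero {n} : E n := fun _ => 0.

Definition pair {n} (g x : E n) : R := \big[Rplus/0]_(i < n) (g i * x i).

Definition is_norm {n} (nrm : E n -> R) : Prop :=
  (forall x, 0 <= nrm x) /\
  (forall x, nrm x = 0 -> forall i, x i = 0) /\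
  (forall c x, nrm (vscal c x) = Rabs c * nrm x) /\
  (forall x y, nrm (vadd x y) <= nrm x + nrm y).

Definition is_dual_norm {n} (nrm dnorm : E n -> R) : Prop :=
  forall g, (exists x, nrm x <= 1 /\ pair g x = dnorm g) /\
            (forall x, nrm x <= 1 -> pair g x <= dnorm g).

Definition is_sharp {n} (nrm dnorm : E n -> R) (sharp : E n -> E n) : Prop :=
  forall g, nrm (sharp g) <= 1 /\ pair g (sharp g) = dnorm g.

Definition has_gradient {n} (nrm : E n -> R) (f : E n -> R) (g : E n -> E n) : Prop :=
  forall x eps, 0 < eps -> exists delta, 0 < delta /\
    forall h, nrm h < delta ->
      Rabs (f (vadd x h) - f x - pair (g x) h) <= eps * nrm h.

Definition C1_with_gradient {n} (nrm dnorm : E n -> R) (f : E n -> R) (g : E n -> E n) : Prop :=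
  has_gradient nrm f g /\
  (forall x eps, 0 < eps -> exists delta, 0 < delta /\
     forall z, nrm (vsub z x) < delta -> dnorm (vsub (g z) (g x)) < eps).

Definition convex {n} (f : E n -> R) : Prop :=
  forall x y t, 0 <= t <= 1 ->
    f (vadd (vscal t x) (vscal (1 - t) y)) <= t * f x + (1 - t) * f y.

Definition prox_function {n} (nrm dnorm : E n -> R) (d : E n -> R) (gd : E n -> E n) : Prop :=
  C1_with_gradient nrm dnorm d gd /\ convex d /\
  (forall x y, d y - d x - pair (gd x) (vsub y x) >= / 2 * (nrm (vsub y x)) ^ 2) /\
  (exists x, d x = 0) /\ (forall x, 0 <= d x).

Definition bregman {n} (d : E n -> R) (gd : E n -> E n) (x z : E n) : R :=
  d x - d z - pair (gd z) (vsub x z).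

Definition L_smooth {n} (nrm dnorm : E n -> R) (L : R) (f : E n -> R) (gf : E n -> E n) : Prop :=
  0 < L /\ C1_with_gradient nrm dnorm f gf /\
  forall x y, dnorm (vsub (gf x) (gf y)) <= L * nrm (vsub x y).

Definition is_minimizer {n} (f : E n -> R) (xs : E n) : Prop :=
  forall x, f xs <= f x.

Definition weakly_quasi_convex {n} (gamma : R) (f : E n -> R) (gf : E n -> E n) (xs : E n) : Prop :=
  0 < gamma <= 1 /\ is_minimizer f xs /\
  forall x, gamma * (f x - f xs) <= pair (gf x) (vsub x xs).

Fixpoint psi {n} (d : E n -> R) (gd : E n -> E n) (f : E n -> R) (gf : E n -> E n)
  (x0 : E n) (a : nat -> R) (y : nat -> E n) (k : nat) (z : E n) : R :=
  match k with
  | O => bregman d gd z x0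
  | S j => psi d gd f gf x0 a y j z + a (S j) * (f (y j) + pair (gf (y j)) (vsub z (y j)))
  end.

Definition line_search_step {n} (f : E n -> R) (x v y : nat -> E n) (beta : nat -> R) (k : nat) : Prop :=
  0 <= beta k <= 1 /\
  (forall b, 0 <= b <= 1 ->
     f (vadd (v k) (vscal (beta k) (vsub (x k) (v k)))) <=
     f (vadd (v k) (vscal b (vsub (x k) (v k))))) /\
  y k = vadd (v k) (vscal (beta k) (vsub (x k) (v k))).

Definition option_a_step {n} (nrm : E n -> R) (L : R) (f : E n -> R) (gf : E n -> E n)
  (x y : nat -> E n) (A a : nat -> R) (k : nat) : Prop :=
  (forall z, f (y k) + pair (gf (y k)) (vsub (x (S k)) (y k)) + L / 2 * (nrm (vsub (x (S k)) (y k))) ^ 2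
             <= f (y k) + pair (gf (y k)) (vsub z (y k)) + L / 2 * (nrm (vsub z (y k))) ^ 2) /\
  0 < a (S k) /\ (a (S k)) ^ 2 / (A k + a (S k)) = / L.

(* a solves the equation of option (b) (with A_k + a <> 0 so the fraction makes sense) *)
Definition option_b_eq {n} (dnorm : E n -> R) (f : E n -> R) (gf : E n -> E n)
  (yk xk1 : E n) (Ak a : R) : Prop :=
  Ak + a <> 0 /\ f yk - a ^ 2 / (2 * (Ak + a)) * (dnorm (gf yk)) ^ 2 = f xk1.

Definition option_b_step {n} (dnorm : E n -> R) (sharp : E n -> E n) (f : E n -> R) (gf : E n -> E n)
  (x y : nat -> E n) (A a h : nat -> R) (k : nat) : Prop :=
  0 <= h (S k) /\
  (forall t, 0 <= t ->
     f (vsub (y k) (vscal (h (S k)) (sharp (gf (y k))))) <= f (vsub (y k) (vscal t (sharp (gf (y k)))))) /\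
  x (S k) = vsub (y k) (vscal (h (S k)) (sharp (gf (y k)))) /\
  option_b_eq dnorm f gf (y k) (x (S k)) (A k) (a (S k)) /\
  (forall a', option_b_eq dnorm f gf (y k) (x (S k)) (A k) a' -> a' <= a (S k)).

Definition update_step {n} (d : E n -> R) (gd : E n -> E n) (f : E n -> R) (gf : E n -> E n)
  (x0 : E n) (v y : nat -> E n) (A a : nat -> R) (k : nat) : Prop :=
  A (S k) = A k + a (S k) /\
  (forall z, psi d gd f gf x0 a y (S k) (v (S k)) <= psi d gd f gf x0 a y (S k) z).

(* The estimating functions psi_k satisfy two invariants.  From above,
   psi_k(x_* ) <= V(x_*, x^0) + A_k ((1 - gamma) f(x^0) + gamma f(x_* )), because
   by weak quasi-convexity each added linear model lies below
   (1 - gamma) f(y^k) + gamma f(x_* ), and f(y^k) <= f(x^0) along the iterates.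
   From below, A_k f(x^k) <= min psi_k: psi_k is the prox-function plus an affine
   term, hence grows quadratically away from its minimizer v^k; the line search
   gives <grad f(y^k), v^k - y^k> >= 0; and both step options give
   A_{k+1} f(x^{k+1}) <= A_{k+1} f(y^k) - a_{k+1}^2 ||grad f(y^k)||_*^2 / 2,
   which is exactly what the quadratic growth pays for the new linear term.
   Chaining the two invariants at x_* gives the bound. *)

From Stdlib Require Import Reals Lra FunctionalExtensionality.
From mathcomp Require Import bigop.
Open Scope R_scope.

Lemma vext {n} (u w : E n) : (forall i, u i = w i) -> u = w.
Proof. intros; apply functional_extensionality; auto. Qed.

Ltac vec_ring := apply vext; intro; unfold vadd, vsub, vscal; ring.

Lemma big_Rplus_add (I : Type) (r : list I) (F G : I -> R) :
  \big[Rplus/0]_(i <- r) (F i + G i) =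
  \big[Rplus/0]_(i <- r) F i + \big[Rplus/0]_(i <- r) G i.
Proof. induction r as [|i r IH]; rewrite ?big_nil, ?big_cons; [ring | rewrite IH; ring]. Qed.

Lemma big_Rplus_scal (I : Type) (r : list I) (c : R) (F : I -> R) :
  \big[Rplus/0]_(i <- r) (c * F i) = c * \big[Rplus/0]_(i <- r) F i.
Proof. induction r as [|i r IH]; rewrite ?big_nil, ?big_cons; [ring | rewrite IH; ring]. Qed.

Section Pairing.
Context {n : nat}.
Implicit Types g x y : E n.

Lemma pair_addr g x y : pair g (vadd x y) = pair g x + pair g y.
Proof. unfold pair; rewrite <- big_Rplus_add; apply eq_bigr; intros; unfold vadd; ring. Qed.

Lemma pair_scalr g x c : pair g (vscal c x) = c * pair g x.
Proof. unfold pair; rewrite <- big_Rplus_scal; apply eq_bigr; intros; unfold vscal; ring. Qed.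

Lemma pair_subr g x y : pair g (vsub x y) = pair g x - pair g y.
Proof.
  replace (vsub x y) with (vadd x (vscal (-1) y)) by vec_ring.
  rewrite pair_addr, pair_scalr; ring.
Qed.

Lemma pair_comm g x : pair g x = pair x g.
Proof. unfold pair; apply eq_bigr; intros; ring. Qed.

Lemma pair_addl g y x : pair (vadd g y) x = pair g x + pair y x.
Proof. rewrite !(pair_comm _ x); apply pair_addr. Qed.

Lemma pair_scall g x c : pair (vscal c g) x = c * pair g x.
Proof. rewrite !(pair_comm _ x); apply pair_scalr. Qed.

Lemma pair_subl g y x : pair (vsub g y) x = pair g x - pair y x.
Proof. rewrite !(pair_comm _ x); apply pair_subr. Qed.

End Pairing.

Section DualNorm.
Context {n : nat} {nrm dnorm : E n -> R}.
Hypotheses (Hnorm : is_norm nrm) (Hdual : is_dual_norm nrm dnorm).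

Lemma nrm_ge0 x : 0 <= nrm x.
Proof. apply Hnorm. Qed.

Lemma nrm_scal c x : nrm (vscal c x) = Rabs c * nrm x.
Proof. apply Hnorm. Qed.

Lemma dnorm_ge0 g : 0 <= dnorm g.
Proof.
  destruct (Hdual g) as [_ Hmax].
  specialize (Hmax (vscal 0 g)).
  rewrite pair_scalr, nrm_scal, Rabs_R0 in Hmax. lra.
Qed.

Lemma pair_le_dnorm g u : pair g u <= dnorm g * nrm u.
Proof.
  pose proof (dnorm_ge0 g). pose proof (nrm_ge0 u).
  destruct (Req_dec (nrm u) 0) as [Hu0|Hu0].
  - destruct Hnorm as (_ & Hdef & _).
    replace u with (vscal 0 u) by (apply vext; intro i; unfold vscal; rewrite (Hdef u Hu0 i); ring).
    rewrite pair_scalr, nrm_scal, Rabs_R0; lra.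
  -
    destruct (Hdual g) as [_ Hmax].
    specialize (Hmax (vscal (/ nrm u) u)).
    rewrite pair_scalr, nrm_scal, Rabs_right, Rinv_l in Hmax
      by (try apply Rle_ge, Rlt_le, Rinv_0_lt_compat; lra).
    apply (Rmult_le_reg_l (/ nrm u)); [apply Rinv_0_lt_compat; lra|].
    replace (/ nrm u * (dnorm g * nrm u)) with (dnorm g) by (field; lra).
    lra.
Qed.

Lemma pair_ge_Ndnorm g u : - (dnorm g * nrm u) <= pair g u.
Proof.
  pose proof (pair_le_dnorm g (vscal (-1) u)) as H.
  rewrite pair_scalr, nrm_scal, Rabs_left in H by lra. lra.
Qed.

End DualNorm.

Lemma derive_ge0_of_right_min (F : R -> R) (t0 l d0 : R) :
  0 < d0 -> derivable_pt_lim F t0 l ->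
  (forall t, 0 < t <= d0 -> F t0 <= F (t0 + t)) -> 0 <= l.
Proof.
  intros Hd0 HF Hmin.
  destruct (Rle_lt_dec 0 l) as [|Hl]; [assumption|exfalso].
  destruct (HF (- l / 2)) as [delta Hdelta]; [lra|].
  pose proof (cond_pos delta) as Hdelta0.
  set (t := Rmin d0 (delta / 2)).
  assert (Ht : 0 < t <= d0).
  { split; [apply Rmin_pos; lra | apply Rmin_l]. }
  assert (Htd : Rabs t < delta).
  { rewrite Rabs_right by lra. pose proof (Rmin_r d0 (delta / 2)). unfold t. lra. }
  specialize (Hdelta t ltac:(lra) Htd).
  assert (Hq : 0 <= (F (t0 + t) - F t0) / t).
  { apply Rmult_le_pos; [pose proof (Hmin t Ht); lra | apply Rlt_le, Rinv_0_lt_compat; lra]. }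
  apply Rabs_def2 in Hdelta. lra.
Qed.

Section Calculus.
Context {n : nat} {nrm dnorm : E n -> R}.
Hypotheses (Hnorm : is_norm nrm) (Hdual : is_dual_norm nrm dnorm).

Lemma line_derivable_pt_lim f g p u c :
  has_gradient nrm f g ->
  derivable_pt_lim (fun t => f (vadd p (vscal t u))) c (pair (g (vadd p (vscal c u))) u).
Proof.
  intros Hg eps Heps.
  set (q := vadd p (vscal c u)). set (N := nrm u).
  assert (HN : 0 <= N) by apply (nrm_ge0 Hnorm).
  destruct (Hg q (eps / (2 * (N + 1)))) as (delta & Hdelta & Hq).
  { apply Rdiv_lt_0_compat; lra. }
  assert (Hdelta' : 0 < delta / (N + 1)) by (apply Rdiv_lt_0_compat; lra).
  exists (mkposreal _ Hdelta'); simpl. intros s Hs Hsd.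
  replace (vadd p (vscal (c + s) u)) with (vadd q (vscal s u)) by (unfold q; vec_ring).
  assert (Hs0 : 0 < Rabs s) by (apply Rabs_pos_lt; assumption).
  assert (Hsu : nrm (vscal s u) = Rabs s * N) by apply (nrm_scal Hnorm).
  assert (Hsmall : nrm (vscal s u) < delta).
  { rewrite Hsu. apply (Rmult_lt_compat_r (N + 1)) in Hsd; [|lra].
    replace (delta / (N + 1) * (N + 1)) with delta in Hsd by (field; lra). nra. }
  specialize (Hq _ Hsmall). rewrite pair_scalr, Hsu in Hq.
  replace ((f (vadd q (vscal s u)) - f q) / s - pair (g q) u)
    with ((f (vadd q (vscal s u)) - f q - s * pair (g q) u) / s) by (field; assumption).
  unfold Rdiv at 1. rewrite Rabs_mult, Rabs_inv.
  apply (Rmult_le_compat_r (/ Rabs s)) in Hq; [|apply Rlt_le, Rinv_0_lt_compat; assumption].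
  eapply Rle_lt_trans; [exact Hq|].
  replace (eps / (2 * (N + 1)) * (Rabs s * N) * / Rabs s) with (eps / 2 * (N / (N + 1)))
    by (field; lra).
  assert (N / (N + 1) <= 1).
  { apply (Rmult_le_reg_r (N + 1)); [lra|]. unfold Rdiv; rewrite Rmult_assoc, Rinv_l; lra. }
  assert (0 <= N / (N + 1)) by (apply Rmult_le_pos; [lra | apply Rlt_le, Rinv_0_lt_compat; lra]).
  nra.
Qed.

Lemma pair_gradient_ge0_of_right_min f g p u c d0 :
  has_gradient nrm f g -> 0 < d0 ->
  (forall t, 0 < t <= d0 -> f p <= f (vadd p (vscal t u)) + t * c) ->
  0 <= pair (g p) u + c.
Proof.
  intros Hg Hd0 Hmin.
  assert (Hp : vadd p (vscal 0 u) = p) by vec_ring.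
  assert (Hline := line_derivable_pt_lim f g p u 0 Hg). rewrite Hp in Hline.
  assert (Hlin := derivable_pt_lim_scal_right _ 0 _ c (derivable_pt_lim_id 0)).
  assert (Hsum := derivable_pt_lim_plus _ _ _ _ _ Hline Hlin).
  apply (derive_ge0_of_right_min (fun t => f (vadd p (vscal t u)) + t * c) 0 _ d0 Hd0).
  - replace (pair (g p) u + c) with (pair (g p) u + 1 * c) by ring. exact Hsum.
  - intros t Ht. rewrite Hp, Rplus_0_l, Rmult_0_l, Rplus_0_r. apply Hmin, Ht.
Qed.

Lemma L_smooth_upper_bound L f gf p u :
  L_smooth nrm dnorm L f gf ->
  f (vadd p u) <= f p + pair (gf p) u + L / 2 * nrm u ^ 2.
Proof.
  intros (HL & (Hg & _) & Hlip).
  set (P := pair (gf p) u). set (N := nrm u). set (K := L / 2 * N ^ 2).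
  assert (HN : 0 <= N) by apply (nrm_ge0 Hnorm).
  assert (Hder : forall c, 0 <= c <= 1 ->
    derivable_pt_lim (fun t => f (vadd p (vscal t u)) - (P * t + K * (t * t))) c
      (pair (gf (vadd p (vscal c u))) u - (P * 1 + K * (1 * c + c * 1)))).
  { intros c _. apply derivable_pt_lim_minus.
    - apply (line_derivable_pt_lim f gf p u c Hg).
    - apply derivable_pt_lim_plus.
      + apply (derivable_pt_lim_scal Ranalysis1.id), derivable_pt_lim_id.
      + apply (derivable_pt_lim_scal (fun t => t * t)).
        apply (derivable_pt_lim_mult Ranalysis1.id Ranalysis1.id); apply derivable_pt_lim_id. }
  destruct (MVT_cor2 _ _ 0 1 Rlt_0_1 Hder) as (c & Hmvt & Hc).
  replace (vadd p (vscal 0 u)) with p in Hmvt by vec_ring.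
  replace (vadd p (vscal 1 u)) with (vadd p u) in Hmvt by vec_ring.
  set (q := vadd p (vscal c u)) in *.
  assert (Hgrowth : pair (gf q) u - P <= L * c * N * N).
  { unfold P; rewrite <- pair_subl.
    eapply Rle_trans; [apply (pair_le_dnorm Hnorm Hdual)|].
    apply Rmult_le_compat_r; [assumption|].
    eapply Rle_trans; [apply Hlip|].
    replace (vsub q p) with (vscal c u) by (unfold q; vec_ring).
    rewrite (nrm_scal Hnorm), Rabs_right by lra. unfold N; lra. }
  unfold K in *. simpl in *. nra.
Qed.

End Calculus.

Section EstimatingFunctions.
Context {n : nat} {nrm dnorm : E n -> R} {d : E n -> R} {gd : E n -> E n}.
Hypotheses (Hnorm : is_norm nrm) (Hd : prox_function nrm dnorm d gd).

Lemma quadratic_growth_at_min (phi : E n -> R) (C v : E n) :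
  (forall z w, phi z - phi w = d z - d w + pair C z - pair C w) ->
  (forall z, phi v <= phi z) ->
  forall z, phi v + / 2 * nrm (vsub z v) ^ 2 <= phi z.
Proof.
  intros Hphi Hmin z. destruct Hd as ((Hg & _) & _ & Hstrong & _).
  assert (Hfirst_order : 0 <= pair (gd v) (vsub z v) + pair C (vsub z v)).
  { apply (pair_gradient_ge0_of_right_min Hnorm d gd v (vsub z v) _ 1 Hg); [lra|].
    intros t _. pose proof (Hmin (vadd v (vscal t (vsub z v)))).
    pose proof (Hphi (vadd v (vscal t (vsub z v))) v) as Hdiff.
    rewrite pair_addr, pair_scalr in Hdiff. lra. }
  pose proof (Hphi z v). pose proof (Hstrong v z). rewrite !pair_subr in *. lra.
Qed.

Lemma psi_sub_prox_affine f gf x0 a y k :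
  exists C, forall z w, psi d gd f gf x0 a y k z - psi d gd f gf x0 a y k w
                        = d z - d w + pair C z - pair C w.
Proof.
  induction k as [|k [C IH]].
  - exists (vscal (-1) (gd x0)). intros z w. simpl. unfold bregman.
    rewrite !pair_subr, !pair_scall. ring.
  - exists (vadd C (vscal (a (S k)) (gf (y k)))). intros z w. simpl.
    rewrite !pair_subr, !pair_addl, !pair_scall.
    specialize (IH z w). lra.
Qed.

Lemma psi_quadratic_growth {f gf x0 a y k v} :
  (forall z, psi d gd f gf x0 a y k v <= psi d gd f gf x0 a y k z) ->
  forall z, psi d gd f gf x0 a y k v + / 2 * nrm (vsub z v) ^ 2 <= psi d gd f gf x0 a y k z.
Proof.
  destruct (psi_sub_prox_affine f gf x0 a y k) as [C HC].
  apply (quadratic_growth_at_min _ C v HC).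
Qed.

End EstimatingFunctions.

Lemma weakly_quasi_convex_linear_model {n gamma} {f : E n -> R} {gf xs} p :
  weakly_quasi_convex gamma f gf xs ->
  f p + pair (gf p) (vsub xs p) <= (1 - gamma) * f p + gamma * f xs.
Proof.
  intros (_ & _ & Hwqc). specialize (Hwqc p). rewrite !pair_subr in *. lra.
Qed.

Lemma line_search_descent {n} {f : E n -> R} {x v y beta k} :
  line_search_step f x v y beta k -> f (y k) <= f (x k).
Proof.
  intros (_ & Hmin & Hy). rewrite Hy.
  replace (x k) with (vadd (v k) (vscal 1 (vsub (x k) (v k)))) at 2 by vec_ring.
  apply Hmin; lra.
Qed.

Lemma line_search_angle {n} {nrm : E n -> R} {f gf x v y beta k} :
  is_norm nrm -> has_gradient nrm f gf -> line_search_step f x v y beta k ->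
  0 <= pair (gf (y k)) (vsub (v k) (y k)).
Proof.
  intros Hnorm Hg (Hbeta & Hmin & Hy).
  replace (vsub (v k) (y k)) with (vscal (beta k) (vsub (v k) (x k))) by (rewrite Hy; vec_ring).
  rewrite pair_scalr.
  destruct (Req_dec (beta k) 0) as [H0|H0]; [rewrite H0; lra|].
  apply Rmult_le_pos; [lra|].
  (* moving from y^k back towards v^k stays on the searched segment *)
  rewrite <- (Rplus_0_r (pair _ _)).
  apply (pair_gradient_ge0_of_right_min Hnorm f gf (y k) _ 0 (beta k) Hg); [lra|].
  intros t Ht. rewrite Rmult_0_r, Rplus_0_r.
  replace (vadd (y k) (vscal t (vsub (v k) (x k))))
    with (vadd (v k) (vscal (beta k - t) (vsub (x k) (v k)))) by (rewrite Hy; vec_ring).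
  rewrite Hy. apply Hmin; lra.
Qed.

Definition descent_estimate (Ak al fy fx G : R) : Prop :=
  0 <= al /\ (Ak + al) * fx <= (Ak + al) * fy - al ^ 2 * G ^ 2 / 2 /\ fx <= fy.

Lemma gradient_step_decrease {n} {nrm dnorm : E n -> R} {sharp L f gf} (p p' : E n) :
  is_norm nrm -> is_dual_norm nrm dnorm -> is_sharp nrm dnorm sharp ->
  L_smooth nrm dnorm L f gf ->
  (forall z, pair (gf p) (vsub p' p) + L / 2 * nrm (vsub p' p) ^ 2
             <= pair (gf p) (vsub z p) + L / 2 * nrm (vsub z p) ^ 2) ->
  f p' <= f p - dnorm (gf p) ^ 2 / (2 * L).
Proof.
  intros Hnorm Hdual Hsharp Hsmooth Hmin.
  pose proof (L_smooth_upper_bound Hnorm Hdual L f gf p (vsub p' p) Hsmooth) as Hup.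
  replace (vadd p (vsub p' p)) with p' in Hup by vec_ring.
  assert (HL : 0 < L) by apply Hsmooth.
  set (G := dnorm (gf p)) in *. set (s := sharp (gf p)).
  destruct (Hsharp (gf p)) as [Hs1 Hs2]. fold s G in Hs1, Hs2.
  assert (HGL : 0 <= G / L)
    by (apply Rmult_le_pos; [apply (dnorm_ge0 Hnorm Hdual) | apply Rlt_le, Rinv_0_lt_compat; lra]).
  specialize (Hmin (vsub p (vscal (G / L) s))).
  replace (vsub (vsub p (vscal (G / L) s)) p) with (vscal (- (G / L)) s) in Hmin by vec_ring.
  rewrite pair_scalr, (nrm_scal Hnorm), Rabs_left1, Hs2 in Hmin by lra.
  assert (Hquad : L / 2 * (- - (G / L) * nrm s) ^ 2 <= L / 2 * (G / L) ^ 2).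
  { apply Rmult_le_compat_l; [lra|]. pose proof (nrm_ge0 Hnorm s).
    replace (- - (G / L)) with (G / L) by ring. rewrite Rpow_mult_distr.
    assert (nrm s ^ 2 <= 1) by nra. pose proof (pow2_ge_0 (G / L)). nra. }
  replace (f p - G ^ 2 / (2 * L)) with (f p + - (G / L) * G + L / 2 * (G / L) ^ 2)
    by (field; lra).
  lra.
Qed.

Lemma option_a_descent_estimate {n} {nrm dnorm : E n -> R} {sharp L f gf x y A a k} :
  is_norm nrm -> is_dual_norm nrm dnorm -> is_sharp nrm dnorm sharp ->
  L_smooth nrm dnorm L f gf -> 0 <= A k -> option_a_step nrm L f gf x y A a k ->
  descent_estimate (A k) (a (S k)) (f (y k)) (f (x (S k))) (dnorm (gf (y k))).
Proof.
  intros Hnorm Hdual Hsharp Hsmooth HA (Hmin & Ha & Hrate).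
  assert (HL : 0 < L) by apply Hsmooth.
  assert (Hdec := gradient_step_decrease (y k) (x (S k)) Hnorm Hdual Hsharp Hsmooth).
  specialize (Hdec ltac:(intro z; specialize (Hmin z); lra)).
  set (G := dnorm (gf (y k))) in *. set (al := a (S k)) in *.
  assert (HG2 : 0 <= G ^ 2 / (2 * L))
    by (apply Rmult_le_pos; [nra | apply Rlt_le, Rinv_0_lt_compat; lra]).
  assert (HAal : 0 < A k + al) by lra.
  assert (Hal2 : al ^ 2 = (A k + al) / L).
  { replace (al ^ 2) with (al ^ 2 / (A k + al) * (A k + al)) by (field; lra).
    rewrite Hrate. field. lra. }
  repeat split; [lra | | lra].
  replace (al ^ 2 * G ^ 2 / 2) with ((A k + al) * (G ^ 2 / (2 * L))) by (rewrite Hal2; field; lra).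
  apply (Rmult_le_compat_l (A k + al)) in Hdec; lra.
Qed.

(* The equation of option (b) is a quadratic in [a] whose two roots sum to
   [2 (f y - f x) / G^2 >= 0] (when [G <> 0]), so its largest root is nonnegative. *)
Lemma largest_root_ge0 (Ak fy fx G al : R) :
  0 <= Ak -> fx <= fy ->
  Ak + al <> 0 -> fy - al ^ 2 / (2 * (Ak + al)) * G ^ 2 = fx ->
  (forall a', Ak + a' <> 0 -> fy - a' ^ 2 / (2 * (Ak + a')) * G ^ 2 = fx -> a' <= al) ->
  0 <= al.
Proof.
  intros HA Hf Hne Heq Hmax.
  destruct (Rle_lt_dec 0 al) as [|Hneg]; [assumption|exfalso].
  destruct (Req_dec (G ^ 2) 0) as [HG0|HG0].
  - assert (1 - al <= al); [|lra].
    apply Hmax; [lra|]. rewrite HG0 in *. lra.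
  - assert (HG : G <> 0) by (intro HG; apply HG0; rewrite HG; ring).
    set (De := fy - fx).
    assert (Hroot : al ^ 2 * G ^ 2 = 2 * De * (Ak + al)) by (unfold De; rewrite <- Heq; field; assumption).
    set (sg := 2 * De / G ^ 2).
    assert (Hsg : sg * G ^ 2 = 2 * De) by (unfold sg; field; assumption).
    assert (Hsum : 0 <= sg)
      by (apply Rmult_le_pos; [unfold De; lra | apply Rlt_le, Rinv_0_lt_compat; nra]).
    set (a2 := sg - al).
    assert (Hroot2 : a2 ^ 2 * G ^ 2 = 2 * De * (Ak + a2)).
    { unfold a2.
      replace ((sg - al) ^ 2 * G ^ 2)
        with (sg * (sg * G ^ 2) - 2 * al * (sg * G ^ 2) + al ^ 2 * G ^ 2) by ring.
      rewrite Hsg, Hroot. ring. }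
    assert (a2 <= al); [|unfold a2 in *; lra].
    apply Hmax; [unfold a2; lra|].
    replace (a2 ^ 2 / (2 * (Ak + a2)) * G ^ 2) with (a2 ^ 2 * G ^ 2 / (2 * (Ak + a2)))
      by (field; unfold a2; lra).
    rewrite Hroot2. unfold De. field. unfold a2; lra.
Qed.

Lemma option_b_descent_estimate {n} {dnorm : E n -> R} {sharp f gf x y A a h k} :
  0 <= A k -> option_b_step dnorm sharp f gf x y A a h k ->
  descent_estimate (A k) (a (S k)) (f (y k)) (f (x (S k))) (dnorm (gf (y k))).
Proof.
  intros HA (_ & Hmin & Hx & (Hne & Heq) & Hmax).
  assert (Hdec : f (x (S k)) <= f (y k)).
  { pose proof (Hmin 0 (Rle_refl 0)) as Hstay.
    replace (vsub (y k) (vscal 0 (sharp (gf (y k))))) with (y k) in Hstay by vec_ring.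
    rewrite Hx. exact Hstay. }
  assert (Hal : 0 <= a (S k)).
  { apply (largest_root_ge0 (A k) (f (y k)) (f (x (S k))) (dnorm (gf (y k)))); auto.
    intros a' Hne' Heq'. apply Hmax. split; assumption. }
  repeat split; [assumption | | assumption].
  rewrite <- Heq. right. field. assumption.
Qed.

Section AGMsDR.
Context {n : nat} {nrm dnorm : E n -> R} {sharp : E n -> E n}.
Context {d : E n -> R} {gd : E n -> E n}.
Context {f : E n -> R} {gf : E n -> E n} {L gamma : R} {xs : E n}.
Context {optA : bool} {x v y : nat -> E n} {A a beta h : nat -> R}.
Hypotheses (Hnorm : is_norm nrm) (Hdual : is_dual_norm nrm dnorm)
  (Hsharp : is_sharp nrm dnorm sharp) (Hd : prox_function nrm dnorm d gd)
  (Hsmooth : L_smooth nrm dnorm L f gf) (Hwqc : weakly_quasi_convex gamma f gf xs).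
Hypotheses (HA0 : A 0%nat = 0) (Hv0 : v 0%nat = x 0%nat)
  (Hls : forall k, line_search_step f x v y beta k)
  (Hstep : forall k, gf (y k) <> vzero ->
     (if optA then option_a_step nrm L f gf x y A a k
      else option_b_step dnorm sharp f gf x y A a h k) /\
     update_step d gd f gf (x 0%nat) v y A a k).

Definition agms_invariant (k : nat) : Prop :=
  let Psi := psi d gd f gf (x 0%nat) a y k in
  0 <= A k /\ f (x k) <= f (x 0%nat) /\ A k * f (x k) <= Psi (v k) /\
  Psi xs <= bregman d gd xs (x 0%nat) + A k * ((1 - gamma) * f (x 0%nat) + gamma * f xs) /\
  (forall z, Psi (v k) <= Psi z).

Lemma agms_invariant_0 : agms_invariant 0.
Proof.
  destruct Hd as (_ & _ & Hstrong & _).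
  unfold agms_invariant; cbn [psi]. rewrite HA0, Hv0.
  assert (Hzero : bregman d gd (x 0%nat) (x 0%nat) = 0).
  { unfold bregman. rewrite pair_subr. ring. }
  rewrite Hzero. repeat split; try lra.
  intros z. specialize (Hstrong (x 0%nat) z).
  pose proof (pow2_ge_0 (nrm (vsub z (x 0%nat)))). unfold bregman. lra.
Qed.

Lemma psi_succ_lower_bound k :
  agms_invariant k -> 0 <= a (S k) -> f (y k) <= f (x k) ->
  0 <= pair (gf (y k)) (vsub (v k) (y k)) ->
  forall z, (A k + a (S k)) * f (y k) - a (S k) ^ 2 * dnorm (gf (y k)) ^ 2 / 2
            <= psi d gd f gf (x 0%nat) a y (S k) z.
Proof.
  intros (HA & _ & Hval & _ & Hmin) Hal Hfy Hangle z. cbn [psi].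
  pose proof (psi_quadratic_growth Hnorm Hd Hmin z) as Hgrowth.
  replace (pair (gf (y k)) (vsub z (y k)))
    with (pair (gf (y k)) (vsub z (v k)) + pair (gf (y k)) (vsub (v k) (y k)))
    by (rewrite !pair_subr; ring).
  pose proof (pair_ge_Ndnorm Hnorm Hdual (gf (y k)) (vsub z (v k))) as Hdual_lb.
  set (G := dnorm (gf (y k))) in *. set (N := nrm (vsub z (v k))) in *.
  set (al := a (S k)) in *.
  assert (HG : 0 <= G) by apply (dnorm_ge0 Hnorm Hdual).
  assert (HN : 0 <= N) by apply (nrm_ge0 Hnorm).
  assert (A k * f (y k) <= A k * f (x k)) by (apply Rmult_le_compat_l; assumption).
  assert (0 <= al * pair (gf (y k)) (vsub (v k) (y k))) by (apply Rmult_le_pos; assumption).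
  assert (- (al * (G * N)) <= al * pair (gf (y k)) (vsub z (v k)))
    by (rewrite Ropp_mult_distr_r; apply Rmult_le_compat_l; assumption).
  (* the quadratic growth absorbs the linear lower bound: N^2/2 - al G N >= -(al G)^2/2 *)
  pose proof (pow2_ge_0 (N - al * G)).
  nra.
Qed.

Lemma agms_invariant_S k : gf (y k) <> vzero -> agms_invariant k -> agms_invariant (S k).
Proof.
  intros Hg0 Hinv.
  destruct (Hstep k Hg0) as [Hopt [HAS Hminv]].
  assert (Hgrad : has_gradient nrm f gf) by apply Hsmooth.
  assert (Hfy := line_search_descent (Hls k)).
  assert (Hangle := line_search_angle Hnorm Hgrad (Hls k)).
  assert (Hest : descent_estimate (A k) (a (S k)) (f (y k)) (f (x (S k))) (dnorm (gf (y k)))).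
  { destruct optA.
    - exact (option_a_descent_estimate Hnorm Hdual Hsharp Hsmooth (proj1 Hinv) Hopt).
    - exact (option_b_descent_estimate (proj1 Hinv) Hopt). }
  destruct Hest as (Hal & Hdesc & Hfx).
  assert (Hlow := psi_succ_lower_bound k Hinv Hal Hfy Hangle (v (S k))).
  assert (Hlin := weakly_quasi_convex_linear_model (y k) Hwqc).
  destruct Hinv as (HA & Hf0 & _ & Hxs & _).
  assert (Hgamma : gamma <= 1) by apply Hwqc.
  unfold agms_invariant. rewrite HAS. repeat split; try lra.
  - cbn [psi].
    assert ((1 - gamma) * f (y k) <= (1 - gamma) * f (x 0%nat))
      by (apply Rmult_le_compat_l; lra).
    assert (a (S k) * (f (y k) + pair (gf (y k)) (vsub xs (y k)))
            <= a (S k) * ((1 - gamma) * f (x 0%nat) + gamma * f xs))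
      by (apply Rmult_le_compat_l; lra).
    lra.
  - apply Hminv.
Qed.

Lemma agms_invariant_all k :
  (forall j, (j < k)%nat -> gf (y j) <> vzero) -> agms_invariant k.
Proof.
  induction k as [|k IH]; intros Hj.
  - exact agms_invariant_0.
  - apply agms_invariant_S; [apply Hj; auto|].
    apply IH. intros j Hjk. apply Hj; auto.
Qed.

End AGMsDR.

Theorem mainTheorem3
  (n : nat) (nrm dnorm : E n -> R) (sharp : E n -> E n)
  (Hnorm : is_norm nrm) (Hdual : is_dual_norm nrm dnorm) (Hsharp : is_sharp nrm dnorm sharp)
  (d : E n -> R) (gd : E n -> E n) (Hd : prox_function nrm dnorm d gd)
  (f : E n -> R) (gf : E n -> E n) (L gamma : R) (xs : E n)
  (Hsmooth : L_smooth nrm dnorm L f gf)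
  (Hwqc : weakly_quasi_convex gamma f gf xs)
  (optA : bool)
  (x v y : nat -> E n) (A a beta h : nat -> R)
  (HA0 : A 0%nat = 0) (Hv0 : v 0%nat = x 0%nat)
  (Hls : forall k, line_search_step f x v y beta k)
  (Hstep : forall k, gf (y k) <> vzero ->
     (if optA then option_a_step nrm L f gf x y A a k
      else option_b_step dnorm sharp f gf x y A a h k) /\
     update_step d gd f gf (x 0%nat) v y A a k) :
  forall k : nat, (forall j, (j < k)%nat -> gf (y j) <> vzero) ->
    A k * (f (x k) - f xs) <=
    (1 - gamma) * A k * (f (x 0%nat) - f xs) + bregman d gd xs (x 0%nat).
Proof.
  intros k Hj.
  destruct (agms_invariant_all Hnorm Hdual Hsharp Hd Hsmooth Hwqc HA0 Hv0 Hls Hstep k Hj)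
    as (_ & _ & Hval & Hxs & Hmin).
  specialize (Hmin xs).
  nra.
Qed.
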